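(* Let $n\ge 3$ and let $\mathcal{H}$ be the associating hypergraph on $M(D_n,2)$. Then the matching number is $\upsilon(\mathcal{H})=n+\lfloor n/3\rfloor$.
   Context: $D_n=\langle x,y\mid x^n=y^2=1,\ xy=yx^{-1}\rangle$. $M(D_n,2)=\{(g,\alpha): g\in D_n,\ \alpha\in\mathbb{Z}_2\}$ with $(g_1,\alpha_1)\circ(g_2,\alpha_2)=(g_1^{1-\alpha_2} g_2^{(-1)^{\alpha_1}} g_1^{\alpha_2},\ \alpha_1+\alpha_2)$. The associating hypergraph $\mathcal{H}$ has vertex set $M(D_n,2)$ ($4n$ vertices), and a 3-element set $\{a,b,c\}$ of distinct elements is a hyperedge when $(a\circ b)\circ c=a\circ(b\circ c)$. A matching is a set of pairwise vertex-disjoint hyperedges; $\upsilon(\mathcal{H})$ is the maximum size of a matching. *)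

From mathcomp Require Import all_boot all_order all_algebra.
Set Implicit Arguments. Unset Strict Implicit. Unset Printing Implicit Defensive.
Import GRing.Theory.
Local Open Scope ring_scope.

(* Dihedral group D_n = <x,y | x^n = y^2 = 1, xy = yx^{-1}>, n >= 3 (so 'Z_n = Z/nZ).
   The element (k, s) represents x^k y^s. *)
Definition dih (n : nat) : finType := ('Z_n * bool)%type.

(* (x^a y^s)(x^b y^t) = x^(a + (-1)^s b) y^(s+t) *)
Definition dmul (n : nat) (g h : dih n) : dih n :=
  (g.1 + (if g.2 then - h.1 else h.1), g.2 (+) h.2).

(* (x^a)^-1 = x^-a ; (x^a y)^-1 = x^a y *)
Definition dinv (n : nat) (g : dih n) : dih n :=
  if g.2 then g else (- g.1, false).

(* M(D_n,2) = D_n x Z_2, with Z_2 represented by bool (addition = xor). *)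
Definition Mvert (n : nat) : finType := (dih n * bool)%type.

(* (g1,a1) o (g2,a2) = (g1^{1-a2} g2^{(-1)^a1} g1^{a2}, a1 + a2) *)
Definition Mop (n : nat) (p q : Mvert n) : Mvert n :=
  let: (g1, a1) := p in let: (g2, a2) := q in
  let g2' := if a1 then dinv g2 else g2 in
  (if a2 then dmul g2' g1 else dmul g1 g2', a1 (+) a2).

Definition is_hyperedge (n : nat) (e : {set Mvert n}) : bool :=
  (#|e| == 3%N) &&
  [exists a : Mvert n, exists b : Mvert n, exists c : Mvert n,
     (e == [set a; b; c]) && (Mop (Mop a b) c == Mop a (Mop b c))].

Definition is_matching (n : nat) (M : {set {set Mvert n}}) : bool :=
  [forall e in M, is_hyperedge e] &&
  [forall e in M, forall f in M, (e != f) ==> [disjoint e & f]].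

Definition matching_number (n : nat) : nat :=
  \max_(M : {set {set Mvert n}} | is_matching M) #|M|.

(* A 3-set on which the operation is associative is a hyperedge, so every set on
   which it is associative carries a matching missing at most two of its vertices.
   On D_n x {0} the operation is the product of D_n; on <x> x Z_2 it is
   (x^a, s) o (x^b, t) = (x^(a + (-1)^s b), s + t), again a dihedral product; and it
   is associative on the reflections paired with 1.  The first two sets (2n
   vertices each) share <x> x {0}; moving 2n mod 3 shared vertices from the first
   to the second splits their union into associative parts of sizes divisible by 3,
   giving n disjoint hyperedges on 3n vertices, and the reflections add n %/ 3 more.
   Conversely, disjoint 3-sets among 4n vertices number at most 4n %/ 3. *)

From mathcomp Require Import all_boot all_order all_algebra.
From mathcomp Require Import ring zify.
Set Implicit Arguments. Unset Strict Implicit. Unset Printing Implicit Defensive.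

Section TriplePacking.
Variable T : finType.
Implicit Types (S : {set T}) (e : {set T}) (P : {set {set T}}).

Definition triple_packing S P :=
  [&& trivIset P, cover P \subset S & [forall e in P, #|e| == 3]].

Lemma triple_packingP S P :
  reflect [/\ trivIset P, cover P \subset S & {in P, forall e, #|e| = 3}]
          (triple_packing S P).
Proof.
apply: (iffP and3P) => -[tiP sPS cP]; split=> //.
  by move=> e /(forall_inP cP)/eqP.
by apply/forall_inP=> e /cP->.
Qed.

Lemma triple_packing1 e : #|e| = 3 -> triple_packing e [set e].
Proof.
by move=> ce; apply/triple_packingP; rewrite trivIset1 cover1; split=> // f /set1P->.
Qed.

Lemma triple_packingW S S' P :
  S \subset S' -> triple_packing S P -> triple_packing S' P.
Proof. by move=> sSS' /and3P[tiP /subset_trans sPS cP]; rewrite /triple_packing tiP sPS. Qed.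

Section Union.
Variables (S1 S2 : {set T}) (P1 P2 : {set {set T}}).
Hypotheses (dS : [disjoint S1 & S2])
  (pP1 : triple_packing S1 P1) (pP2 : triple_packing S2 P2).

Lemma triple_packingU : triple_packing (S1 :|: S2) (P1 :|: P2).
Proof.
case/triple_packingP: pP1 => tP1 sP1 cP1; case/triple_packingP: pP2 => tP2 sP2 cP2.
apply/triple_packingP; split.
- by apply: trivIsetU => //; apply: disjointW dS.
- by rewrite /cover bigcup_setU setUSS.
- by move=> e /setUP[/cP1|/cP2].
Qed.

Lemma card_triple_packingU : #|P1 :|: P2| = #|P1| + #|P2|.
Proof.
case/triple_packingP: pP1 => _ sP1 cP1; case/triple_packingP: pP2 => _ sP2 _.
rewrite cardsU; suff -> : P1 :&: P2 = set0 by rewrite cards0 subn0.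
apply/setP=> e; rewrite !inE; apply/negP=> /andP[eP1 eP2].
have : e \subset S1 :&: S2.
  by rewrite subsetI (subset_trans _ sP1) ?(subset_trans _ sP2) ?bigcup_sup.
by rewrite (disjoint_setI0 dS) subset0 => /eqP e0; move: (cP1 e eP1); rewrite e0 cards0.
Qed.

End Union.

Lemma exists_triple_packing S : exists2 P, triple_packing S P & #|P| = #|S| %/ 3.
Proof.
elim: {S}_.+1 {-2}S (ltnSn #|S|) => // m IH S leSm.
have [ltS3 | le3S] := ltnP #|S| 3.
  exists set0; last by rewrite cards0 divn_small.
  apply/triple_packingP; rewrite /trivIset /cover !big_set0 cards0 sub0set.
  by split=> // e; rewrite inE.
have [s [uniq_s size_s sub_s]] := card_geqP le3S.
set e := [set x in s].
have ce : #|e| = 3 by rewrite cardsE (card_uniqP uniq_s).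
have eS : e \subset S by apply/subsetP=> x; rewrite inE => /sub_s.
have cSe : #|S :\: e| = #|S| - 3 by rewrite cardsD (setIidPr eS) ce.
have /IH[P pP cP] : #|S :\: e| < m by rewrite cSe; lia.
have dS : [disjoint e & S :\: e] by rewrite disjoints_subset setCD subsetUr.
exists ([set e] :|: P).
  apply: triple_packingW (triple_packingU dS (triple_packing1 ce) pP).
  by rewrite subUset eS subsetDl.
by rewrite (card_triple_packingU dS (triple_packing1 ce) pP) cards1 cP cSe; lia.
Qed.

Lemma triple_packing_card S P : triple_packing S P -> 3 * #|P| <= #|S|.
Proof.
case/triple_packingP=> /eqP tiP sPS cP.
rewrite mulnC -sum_nat_const -(eq_bigr _ cP) tiP; exact: subset_leq_card.
Qed.

End TriplePacking.

Section AssociatingHypergraph.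
Variable n : nat.
Implicit Types (S : {set Mvert n}) (e : {set Mvert n}) (M : {set {set Mvert n}}).

Definition assoc_on S :=
  {in S & &, forall a b c, Mop (Mop a b) c = Mop a (Mop b c)}.

Lemma assoc_onS S S' : S' \subset S -> assoc_on S -> assoc_on S'.
Proof. by move=> /subsetP sS'S aS a b c /sS'S aS' /sS'S bS' /sS'S cS'; apply: aS. Qed.

Lemma assoc_on_hyperedge S e : assoc_on S -> e \subset S -> #|e| = 3 -> is_hyperedge e.
Proof.
move=> aS /subsetP eS ce; apply/andP; split; first by rewrite ce.
move: (set_enum e) (enum_uniq e) (cardE e); rewrite ce.
case: (enum e) => [|a [|b [|c [|]]]] //= def_e _ _.
have mem_e x : x \in [:: a; b; c] -> x \in S by move=> x_abc; apply: eS; rewrite -def_e inE.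
apply/existsP; exists a; apply/existsP; exists b; apply/existsP; exists c.
rewrite aS ?mem_e ?mem_head ?inE ?eqxx ?orbT // andbT -def_e.
by apply/eqP/setP=> x; rewrite !inE orbA.
Qed.

Definition matching_in S M :=
  triple_packing S M && [forall e in M, is_hyperedge e].

Lemma is_matchingE M : is_matching M = matching_in [set: Mvert n] M.
Proof.
apply/andP/andP=> -[hM tM]; split=> //.
  apply/triple_packingP; split; last by move=> e /(forall_inP hM)/andP[/eqP].
    apply/trivIsetP=> e f eM fM.
    exact: implyP (forall_inP (forall_inP tM e eM) f fM).
  exact: subsetT.
apply/forall_inP=> e eM; apply/forall_inP=> f fM; apply/implyP.
by case/triple_packingP: hM => /trivIsetP tiM _ _; apply: tiM.
Qed.

Lemma matching_in_setU S1 S2 k1 k2 : [disjoint S1 & S2] ->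
  (exists2 M, matching_in S1 M & #|M| = k1) ->
  (exists2 M, matching_in S2 M & #|M| = k2) ->
  exists2 M, matching_in (S1 :|: S2) M & #|M| = k1 + k2.
Proof.
move=> dS [M1 /andP[pM1 /forall_inP hM1] <-] [M2 /andP[pM2 /forall_inP hM2] <-].
exists (M1 :|: M2); last exact: card_triple_packingU dS pM1 pM2.
rewrite /matching_in triple_packingU //.
by apply/forall_inP=> e /setUP[/hM1|/hM2].
Qed.

Lemma assoc_on_matching_in S : assoc_on S ->
  exists2 M, matching_in S M & #|M| = #|S| %/ 3.
Proof.
move=> aS; have [P pP cP] := exists_triple_packing S; exists P => //.
rewrite /matching_in pP; apply/forall_inP=> e eP.
case/triple_packingP: pP => _ sPS cP3.
by apply: assoc_on_hyperedge aS _ (cP3 e eP); apply: subset_trans sPS; apply: bigcup_sup.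
Qed.

(* Move |S| mod 3 common vertices from S to T: both parts then have sizes divisible by 3. *)
Lemma assoc_on_setU_matching S T :
  assoc_on S -> assoc_on T -> 3 %| #|S :|: T| -> #|S| %% 3 <= #|S :&: T| ->
  exists2 M, matching_in (S :|: T) M & #|M| = #|S :|: T| %/ 3.
Proof.
move=> aS aT dvd3 /card_geqP[s [uniq_s size_s sST]].
pose K := [set x in s]; pose X := S :\: K; pose Y := (S :|: T) :\: X.
have /subsetIP[KS KT] : K \subset S :&: T by apply/subsetP=> x; rewrite inE => /sST.
have XST : X \subset S :|: T by rewrite (subset_trans (subsetDl S K)) ?subsetUl.
have YT : Y \subset T.
  apply/subsetP=> y; rewrite !inE; case: (y \in S); rewrite ?andbT ?andbF //=.
  by move=> /negPn /sST /setIP[].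
have dXY : [disjoint X & Y] by rewrite disjoints_subset setCD subsetUr.
have XY : X :|: Y = S :|: T.
  by apply/setP=> x; rewrite !inE; case: (x \in S); case: (x \in T); case: (x \in s).
have cX : #|X| = #|S| - #|S| %% 3.
  by rewrite cardsD (setIidPr KS) cardsE (card_uniqP uniq_s) size_s.
have cY : #|Y| = #|S :|: T| - #|X| by rewrite cardsD (setIidPr XST).
have leS : #|S| <= #|S :|: T| by rewrite subset_leq_card ?subsetUl.
have := matching_in_setU dXY (assoc_on_matching_in (assoc_onS (subsetDl S K) aS))
  (assoc_on_matching_in (assoc_onS YT aT)).
by rewrite XY cY cX => -[M hM cM]; exists M => //; rewrite cM; lia.
Qed.

End AssociatingHypergraph.

Lemma dmulA n (g h k : dih n) : dmul (dmul g h) k = dmul g (dmul h k).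
Proof. by case: g h k => [a [] ] [b [] ] [c [] ]; rewrite /dmul /=; congr (_, _); ring. Qed.

Section DihedralParts.
Variable n : nat.

Definition Mdih0 : {set Mvert n} := [set v | ~~ v.2].
Definition Mrot : {set Mvert n} := [set v | ~~ v.1.2].
Definition Mrefl1 : {set Mvert n} := [set v | v.1.2 && v.2].

Lemma assoc_on_Mdih0 : assoc_on Mdih0.
Proof. by move=> [g []] [h []] [k []]; rewrite !inE // /Mop dmulA. Qed.

Lemma assoc_on_Mrot : assoc_on Mrot.
Proof.
move=> [[a []] x] [[b []] y] [[c []] z]; rewrite !inE //= => _ _ _.
by case: x y z => [] [] []; rewrite /Mop /dmul /dinv /=; congr (_, _, _); ring.
Qed.

Lemma assoc_on_Mrefl1 : assoc_on Mrefl1.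
Proof.
move=> [[a []] []] [[b []] []] [[c []] []]; rewrite !inE //= => _ _ _.
by rewrite /Mop /dmul /dinv /=; congr (_, _, _); ring.
Qed.

Hypothesis n_gt1 : 1 < n.

Lemma card_Mvert_bits (P : bool -> bool -> bool) (S : {set Mvert n}) :
  (forall v, (v \in S) = P v.1.2 v.2) ->
  #|S| = n * (P false false + P false true + P true false + P true true).
Proof.
move=> defS; rewrite -sum1_card (eq_bigl _ _ defS) big_mkcond /=.
rewrite -(pair_bigA _ (fun g a => if P g.2 a then 1 else 0)) /=.
rewrite -(pair_bigA _ (fun k s => \sum_(a : bool) if P s a then 1 else 0)) /=.
rewrite sum_nat_const card_ord Zp_cast // !big_bool /=.
by case: (P false false); case: (P false true); case: (P true false); case: (P true true).
Qed.

Lemma card_Mvert : #|[set: Mvert n]| = 4 * n.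
Proof. by rewrite (@card_Mvert_bits (fun _ _ => true)) 1?mulnC // => v; rewrite inE. Qed.

Lemma card_Mdih0_Mrot : #|Mdih0 :|: Mrot| = 3 * n.
Proof. by rewrite (@card_Mvert_bits (fun s a => ~~ a || ~~ s)) 1?mulnC // => v; rewrite !inE. Qed.

Lemma card_Mdih0_Mrot_meet : #|Mdih0 :&: Mrot| = n.
Proof. by rewrite (@card_Mvert_bits (fun s a => ~~ a && ~~ s)) 1?muln1 // => v; rewrite !inE. Qed.

Lemma card_Mrefl1 : #|Mrefl1| = n.
Proof. by rewrite (@card_Mvert_bits (fun s a => s && a)) 1?muln1 // => v; rewrite !inE. Qed.

End DihedralParts.

Theorem mainTheorem10 (n : nat) : (3 <= n)%N ->
  matching_number n = (n + n %/ 3)%N.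
Proof.
move=> n_ge3; have n_gt1 : 1 < n by apply: leq_trans n_ge3.
apply/eqP; rewrite eqn_leq; apply/andP; split.
  apply/bigmax_leqP=> M; rewrite is_matchingE => /andP[/triple_packing_card].
  by rewrite card_Mvert //; lia.
have dis : [disjoint Mdih0 n :|: Mrot n & Mrefl1 n].
  by rewrite -setI_eq0; apply/eqP/setP=> v; rewrite !inE; case: v => [[k [] [] ]].
have defMvert : Mdih0 n :|: Mrot n :|: Mrefl1 n = [set: Mvert n].
  by apply/setP=> v; rewrite !inE; case: v => [[k [] [] ]].
have [||M hM cM] := matching_in_setU dis
  (assoc_on_setU_matching (@assoc_on_Mdih0 n) (@assoc_on_Mrot n) _ _)
  (assoc_on_matching_in (@assoc_on_Mrefl1 n)).
- by rewrite card_Mdih0_Mrot // dvdn_mulr.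
- by rewrite card_Mdih0_Mrot_meet //; apply: leq_trans n_ge3; rewrite ltnW ?ltn_mod.
have matM : is_matching M by rewrite is_matchingE -defMvert.
apply: leq_trans (leq_bigmax_cond _ matM).
by rewrite cM card_Mdih0_Mrot // card_Mrefl1 // mulKn.
Qed.
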